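(* Let $(G,\cdot)$ be a loop with identity $e$ and $(H,\cdot)$ a non-trivial subloop such that $(xs\cdot z)s=x(sz\cdot s)$ for all $x,z\in G$, $s\in H$, and such that $s^2\in N_\rho(G)\cap H$ for all $s\in H$. Then for every $s\in H$, the map $L_sR_s^{-1}$ is a second Smarandache semi-automorphism of $G_H$, i.e. $e(L_sR_s^{-1})=e$ and $(ty\cdot t)L_sR_s^{-1}=(tL_sR_s^{-1}\cdot yL_sR_s^{-1})\,tL_sR_s^{-1}$ for all $y\in G$, $t\in H$.
   Context: Juxtaposition binds more tightly than $\cdot$. Maps are written on the right and composed left to right; $xR_s=x\cdot s$, $xL_s=s\cdot x$, $s^2=ss$. The right nucleus is $N_\rho(G)=\{a\in G: y\cdot xa=yx\cdot a\ \forall x,y\in G\}$. *)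

(* (T, mul) is a loop with identity e; ldiv / rdiv are the left and right
   divisions: ldiv x y is the unique z with x*z = y (so ldiv x = L_x^{-1}),
   rdiv y x is the unique z with z*x = y (so fun y => rdiv y x = R_x^{-1}). *)
Definition is_loop {T : Type} (mul : T -> T -> T) (e : T)
  (ldiv rdiv : T -> T -> T) : Prop :=
  (forall x, mul e x = x) /\ (forall x, mul x e = x) /\
  (forall x y, mul x (ldiv x y) = y) /\ (forall x y, ldiv x (mul x y) = y) /\
  (forall x y, mul (rdiv y x) x = y) /\ (forall x y, rdiv (mul y x) x = y).

Definition is_subloop {T : Type} (mul : T -> T -> T) (e : T)
  (ldiv rdiv : T -> T -> T) (H : T -> Prop) : Prop :=
  H e /\ (forall x y, H x -> H y -> H (mul x y)) /\
  (forall x y, H x -> H y -> H (ldiv x y)) /\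
  (forall x y, H x -> H y -> H (rdiv x y)).

Definition nontrivial_subloop {T : Type} (e : T) (H : T -> Prop) : Prop :=
  exists h, H h /\ h <> e.

Definition right_nucleus {T : Type} (mul : T -> T -> T) (a : T) : Prop :=
  forall x y, mul y (mul x a) = mul (mul y x) a.

(* The map L_s R_s^{-1} (maps act on the right, composed left to right):
   x |-> (s*x) R_s^{-1} = (s*x)/s. *)
Definition LsRsinv {T : Type} (mul : T -> T -> T) (rdiv : T -> T -> T)
  (s : T) (x : T) : T := rdiv (mul s x) s.

Definition second_S_semi_automorphism {T : Type} (mul : T -> T -> T) (e : T)
  (H : T -> Prop) (f : T -> T) : Prop :=
  f e = e /\
  (forall y t, H t -> f (mul (mul t y) t) = mul (mul (f t) (f y)) (f t)).


(* Write f := L_s R_s^{-1}, so that f x * s = s * x.  Cancelling s on the right,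
   the Bol-type identity and s^2 in the right nucleus give first
   s t * y = (f t * f y) s, and then ((f t * f y) f t) s = s (t y * t);
   dividing by s on the right is the semi-automorphism identity. *)

Section LsRsinv_semi_automorphism.

Variables (T : Type) (mul : T -> T -> T) (e : T) (rdiv : T -> T -> T).
Hypothesis mul1x : forall x, mul e x = x.
Hypothesis mulx1 : forall x, mul x e = x.
Hypothesis rdivK : forall x y, mul (rdiv y x) x = y.
Hypothesis mulK : forall x y, rdiv (mul y x) x = y.

Lemma mulIr (u v w : T) : mul u w = mul v w -> u = v.
Proof. intros E. rewrite <- (mulK w u), <- (mulK w v), E. reflexivity. Qed.

Lemma LsRsinv_e (s : T) : LsRsinv mul rdiv s e = e.
Proof. unfold LsRsinv. rewrite mulx1. rewrite <- (mulK s e), mul1x. reflexivity. Qed.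

Lemma LsRsinvK (s x : T) : mul (LsRsinv mul rdiv s x) s = mul s x.
Proof. apply rdivK. Qed.

Variable H : T -> Prop.
Hypothesis bol : forall x z s, H s ->
  mul (mul (mul x s) z) s = mul x (mul (mul s z) s).

Lemma right_alternative (x s : T) : H s -> mul (mul x s) s = mul x (mul s s).
Proof. intros Hs. pose proof (bol x e s Hs) as E. rewrite !mulx1 in E. exact E. Qed.

Variable s : T.
Hypothesis Hs : H s.
Hypothesis s2_nucleus : right_nucleus mul (mul s s).

Local Notation f := (LsRsinv mul rdiv s).

Lemma mul_LsRsinv (t y : T) : mul (mul s t) y = mul (mul (f t) (f y)) s.
Proof.
  apply (mulIr _ _ s). rewrite <- (LsRsinvK s t).
  rewrite bol, <- (LsRsinvK s y), right_alternative, s2_nucleus by exact Hs.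
  rewrite right_alternative by exact Hs. reflexivity.
Qed.

Lemma LsRsinv_bol_mul (t y : T) : H t ->
  mul (mul (mul (f t) (f y)) (f t)) s = mul s (mul (mul t y) t).
Proof.
  intros Ht. apply (mulIr _ _ s).
  rewrite right_alternative, <- s2_nucleus, <- right_alternative by exact Hs.
  rewrite LsRsinvK, <- bol, <- mul_LsRsinv by exact Hs.
  rewrite bol by exact Ht. reflexivity.
Qed.

Lemma LsRsinv_semi_auto (t y : T) : H t ->
  f (mul (mul t y) t) = mul (mul (f t) (f y)) (f t).
Proof.
  intros Ht. unfold LsRsinv at 1. rewrite <- LsRsinv_bol_mul by exact Ht. apply mulK.
Qed.

End LsRsinv_semi_automorphism.

Theorem corollary3p2 (T : Type) (mul : T -> T -> T) (e : T)
  (ldiv rdiv : T -> T -> T) (H : T -> Prop) :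
  is_loop mul e ldiv rdiv ->
  is_subloop mul e ldiv rdiv H ->
  nontrivial_subloop e H ->
  (forall x z s, H s -> mul (mul (mul x s) z) s = mul x (mul (mul s z) s)) ->
  (forall s, H s -> right_nucleus mul (mul s s) /\ H (mul s s)) ->
  forall s, H s -> second_S_semi_automorphism mul e H (LsRsinv mul rdiv s).
Proof.
  intros [mul1x [mulx1 [_ [_ [rdivK mulK]]]]] _ _ bol nucleus s Hs.
  destruct (nucleus s Hs) as [s2_nucleus _].
  split.
  - now apply LsRsinv_e.
  - intros y t Ht. now apply LsRsinv_semi_auto with (e := e) (H := H).
Qed.
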